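(* Fix $y\in X$ and $f\in P_k$. Suppose there are polynomials $p_1,\dotsc,p_M$ of degree $k$ on $\mathbb{R}^{n(n-1)/2}$, each taking only the values $0$ or $1$ on $X$, and positive constants $b_k < c_k$ such that for every pair of distinct $i,j\in\{1,\dotsc,n\}$, \[ \sum_{x\in X:\ \{i,j\}\in x}\ \sum_{\ell=1}^{M} p_\ell(x) = \begin{cases} b_k & \text{if } \{i,j\}\notin y,\\ c_k & \text{if } \{i,j\}\in y.\end{cases} \] Then $-\frac{b_k(n-1)}{2(c_k-b_k)} \le f(y)$.
   Context: Let $N=n(n-1)/2$, coordinates of $\mathbb{R}^N$ indexed by unordered pairs $\{i,j\}$ of distinct elements of $\{1,\dotsc,n\}$. Let $X\subset\mathbb{R}^N$ be the set of incidence vectors of Hamiltonian cycles of $K_n$; for $x\in X$, ''$\{i,j\}\in x$'' means the cycle $x$ contains edge $\{i,j\}$. $P_k$ is the set of functions $f:X\to\mathbb{R}$ that are restrictions of linear functions on $\mathbb{R}^N$, have average value $1$ on $X$, and such that $q_f(h)=\frac{1}{|X|}\sum_{x\in X}f(x)h(x)^2\ge 0$ for every polynomial $h$ of degree at most $k$ on $\mathbb{R}^N$. *)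

From HB Require Import structures.
From mathcomp Require Import all_boot all_order all_fingroup all_algebra.
From mathcomp Require Import mpoly.
Set Implicit Arguments. Unset Strict Implicit. Unset Printing Implicit Defensive.
Import Order.TTheory GRing.Theory Num.Theory.
Local Open Scope ring_scope.

Definition edge (n : nat) := {A : {set 'I_n} | #|A| == 2%N}.

(* N = number of coordinates = #edges (= n(n-1)/2). *)
Definition nE (n : nat) : nat := #|{: edge n}|.

(* Hamiltonian cycles of K_n, as edge sets: the edges {s i, s (i+1 mod n)}
   of a cyclic ordering s of the vertices. *)
Definition ham_cycles (n : nat) : {set {set edge n}} :=
  [set C : {set edge n} | [exists s : perm_of (ordinal n),
     C == [set e : edge n | [exists i : 'I_n, val e == [set s i; s (ordS i)]]]]].

(* Incidence vector of an edge set, as a point of R^N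
   (coordinates indexed by edges via enum_val). *)
Definition inc (R : nzRingType) (n : nat) (C : {set edge n}) : 'I_(nE n) -> R :=
  fun i => if enum_val i \in C then 1 else 0.

Definition chi (R : nzRingType) (n : nat) (C : {set edge n}) (e : edge n) : R :=
  if e \in C then 1 else 0.

(* P_k : restrictions to X of linear functions, average 1 on X, and
   q_f(h) >= 0 for all polynomials h of degree <= k (msize h <= k+1). *)
Definition in_Pk (R : realFieldType) (n k : nat) (f : {set edge n} -> R) : Prop :=
  [/\ (exists a : edge n -> R, forall x, x \in ham_cycles n ->
          f x = \sum_(e : edge n) a e * chi R x e),
      (#|ham_cycles n|%:R)^-1 * \sum_(x in ham_cycles n) f x = 1
    & forall h : {mpoly R[nE n]}, (msize h <= k.+1)%N ->
        0 <= (#|ham_cycles n|%:R)^-1 *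
               \sum_(x in ham_cycles n) f x * (h.@[inc R x]) ^+ 2].

From mathcomp Require Import all_boot all_order all_fingroup all_algebra.
From mathcomp Require Import mpoly.
From mathcomp Require Import zify ring lra.
Import Order.TTheory GRing.Theory Num.Theory.
Set Implicit Arguments. Unset Strict Implicit. Unset Printing Implicit Defensive.

(** Write [f x = sum_e a_e [e \in x]] on [X].  Since every [p_l] is 0/1-valued
    on [X], [p_l = p_l^2] there, so positivity of [q_f] gives
    [0 <= sum_x f(x) sum_l p_l(x) = sum_e a_e sum_(x ∋ e) sum_l p_l(x)
        = b sum_e a_e + (c - b) f(y)].
    The symmetric group acts edge-transitively on [X], so every edge lies in
    the same number [N] of Hamiltonian cycles; double counting gives
    [N (n - 1) = 2 |X|], and the average condition [sum_x f(x) = |X|] becomes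
    [N sum_e a_e = |X|], i.e. [sum_e a_e = (n - 1) / 2]. *)

Section EdgeTransitivity.

Variable n : nat.
Implicit Types (s : {perm 'I_n}) (e : edge n) (x : {set edge n}).

Lemma card_perm_edge s e : #|s @: val e| == 2.
Proof. by rewrite card_imset ?(valP e) //; exact: perm_inj. Qed.

Definition edge_perm s e : edge n := exist _ (s @: val e) (card_perm_edge s e).

Lemma edge_permK s : cancel (edge_perm s) (edge_perm s^-1).
Proof.
by move=> e; apply: val_inj; rewrite /= -imset_comp (eq_imset _ (permK s)) imset_id.
Qed.

Lemma edge_permKV s : cancel (edge_perm s^-1) (edge_perm s).
Proof. by move=> e; rewrite -[in edge_perm s](invgK s) edge_permK. Qed.

Lemma edge_perm_transitive e e' : exists s, edge_perm s e = e'.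
Proof.
have /cards2P [u [v [uv e_uv]]] := valP e.
have /cards2P [u' [v' [uv' e'_uv']]] := valP e'.
pose t := tperm u u'.
have tv_u' : t v != u' by rewrite -(tpermL u u') (inj_eq perm_inj) eq_sym.
exists (t * tperm (t v) v')%g; apply: val_inj.
by rewrite /= e_uv e'_uv' imsetU1 imset_set1 !permM tpermL /t tpermL tpermD // eq_sym.
Qed.

Definition cycle_perm s x : {set edge n} := [set e | edge_perm s^-1 e \in x].

Lemma mem_cycle_perm s x e : (edge_perm s e \in cycle_perm s x) = (e \in x).
Proof. by rewrite inE edge_permK. Qed.

Lemma cycle_perm_inj s : injective (cycle_perm s).
Proof.
move=> x x' eq_xx'; apply/setP => e.
by rewrite -(mem_cycle_perm s x) -(mem_cycle_perm s x') eq_xx'.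
Qed.

Lemma cycle_perm_ham s x : x \in ham_cycles n -> cycle_perm s x \in ham_cycles n.
Proof.
rewrite !inE => /existsP [t /eqP ->]; apply/existsP; exists (t * s)%g.
apply/eqP/setP => e; rewrite !inE.
apply/existsP/existsP => -[i /eqP e_i]; exists i; last first.
  by rewrite /= e_i !permM imsetU1 imset_set1 !permK.
have -> : val e = s @: val (edge_perm s^-1 e) by rewrite -{1}(edge_permKV s e).
by rewrite e_i imsetU1 imset_set1 !permM.
Qed.

Definition ncycles_through e := #|[set x in ham_cycles n | e \in x]|.

Lemma ncycles_through_perm s e :
  (ncycles_through e <= ncycles_through (edge_perm s e))%N.
Proof.
rewrite /ncycles_through -(card_imset _ (@cycle_perm_inj s)).
apply/subset_leq_card/subsetP => _ /imsetP [x + ->]; rewrite inE => /andP [Xx ex].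
by rewrite inE cycle_perm_ham // mem_cycle_perm.
Qed.

Lemma ncycles_through_const e e' : ncycles_through e = ncycles_through e'.
Proof.
have [s <-] := edge_perm_transitive e e'.
apply/eqP; rewrite eqn_leq ncycles_through_perm /=.
by rewrite -{2}(edge_permK s e) ncycles_through_perm.
Qed.

End EdgeTransitivity.

Section Counting.

Variable n : nat.
Implicit Types (e : edge n) (x : {set edge n}).

Lemma ordS_val (i : 'I_n) : val (ordS i) = if i.+1 == n then 0%N else i.+1.
Proof.
rewrite /=; case: eqP => [->|ne]; first exact: modnn.
by rewrite modn_small //; have := ltn_ord i; lia.
Qed.

Lemma ordS_neq (i : 'I_n) : (1 < n)%N -> ordS i != i.
Proof.
move=> n_gt1; rewrite -val_eqE ordS_val /=.
by case: ifP => /eqP; lia.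
Qed.

Lemma ordS2_neq (i : 'I_n) : (2 < n)%N -> ordS (ordS i) != i.
Proof.
move=> n_gt2; rewrite -val_eqE !ordS_val /=; have := ltn_ord i.
by do 2 case: ifP => /eqP; lia.
Qed.

Lemma card_ham_cycle x : (2 < n)%N -> x \in ham_cycles n -> #|x| = n.
Proof.
move=> n_gt2; rewrite inE => /existsP [t /eqP ->].
have card_step i : #|[set t i; t (ordS i)]| == 2.
  by rewrite cards2 (inj_eq perm_inj) (eq_sym i) ordS_neq //; lia.
pose step i : edge n := exist (fun A : {set 'I_n} => #|A| == 2) _ (card_step i).
have -> : [set e | [exists i, val e == [set t i; t (ordS i)]]] = step @: setT.
  apply/setP => e; rewrite inE.
  apply/existsP/imsetP => [[i /eqP e_i]|[i _ ->]]; last by exists i.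
  by exists i => //; apply: val_inj.
rewrite card_imset ?cardsT ?card_ord // => i j /(congr1 val) /= eq_ij.
have /set2P [/perm_inj //|tij] : t i \in [set t j; t (ordS j)] by rewrite -eq_ij set21.
have /set2P [/perm_inj //|tji] : t j \in [set t i; t (ordS i)] by rewrite eq_ij set21.
by have := ordS2_neq i n_gt2; rewrite -(perm_inj tji) -(perm_inj tij) eqxx.
Qed.

Lemma ham_cycles_card_gt0 : (0 < #|ham_cycles n|)%N.
Proof.
by apply/card_gt0P; eexists; rewrite inE; apply/existsP; exists 1%g.
Qed.

Lemma card_edge : (2 * nE n = n * n.-1)%N.
Proof.
rewrite /nE card_sig (eq_card (B := [set A : {set 'I_n} | #|A| == 2])).
  by rewrite card_draws card_ord mulnC -[2]/(2`!) bin_ffact ffactnS ffactn1.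
by move=> A; rewrite !inE.
Qed.

Lemma sum_ncycles_through :
  (\sum_(e : edge n) ncycles_through e = \sum_(x in ham_cycles n) #|x|)%N.
Proof.
under [RHS]eq_bigr do rewrite -sum1_card.
rewrite (exchange_big_dep predT) //=; apply: eq_bigr => e _.
by rewrite sum1_card /ncycles_through cardsE.
Qed.

Lemma ncycles_through_card e :
  (2 < n)%N -> (ncycles_through e * n.-1 = 2 * #|ham_cycles n|)%N.
Proof.
move=> n_gt2; have := sum_ncycles_through.
rewrite (eq_bigr _ (fun e' _ => ncycles_through_const e' e)) sum_nat_const.
rewrite (eq_bigr _ (fun x Xx => card_ham_cycle n_gt2 Xx)) sum_nat_const => count.
apply/eqP; rewrite -(eqn_pmul2l (_ : 0 < n)%N); last by lia.
change (nE n * ncycles_through e = #|ham_cycles n| * n)%N in count.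
by rewrite mulnCA -card_edge mulnCA [(ncycles_through e * _)%N]mulnC count; lia.
Qed.

End Counting.

Local Open Scope ring_scope.

Lemma sum_linear_mul (R : nzRingType) n (X : {set {set edge n}})
    (a : edge n -> R) (w : {set edge n} -> R) :
  \sum_(x in X) (\sum_e a e * chi R x e) * w x
    = \sum_e a e * \sum_(x in X | e \in x) w x.
Proof.
under eq_bigr do rewrite mulr_suml.
rewrite exchange_big /=; apply: eq_bigr => e _.
rewrite mulr_sumr big_mkcondr /=; apply: eq_bigr => x _.
by rewrite /chi; case: (e \in x); rewrite ?mulr1 ?mulr0 ?mul0r.
Qed.

Section FunctionsInPk.

Variables (R : realFieldType) (n k : nat) (f : {set edge n} -> R).
Hypothesis fPk : in_Pk k f.

Lemma in_Pk_sum_coef (a : edge n -> R) : (2 < n)%N ->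
  {in ham_cycles n, forall x, f x = \sum_e a e * chi R x e} ->
  2 * \sum_e a e = n%:R - 1.
Proof.
move=> n_gt2 fE; have [_ avg _] := fPk.
have X_gt0 : (0 : R) < #|ham_cycles n|%:R by rewrite ltr0n ham_cycles_card_gt0.
have sum_f : \sum_(x in ham_cycles n) f x = #|ham_cycles n|%:R.
  apply: (mulfI (invr_neq0 (lt0r_neq0 X_gt0))).
  by rewrite avg mulVf ?lt0r_neq0.
have sum_f_coef :
    \sum_(x in ham_cycles n) f x = \sum_e a e * (ncycles_through e)%:R.
  rewrite (eq_bigr (fun x => (\sum_e a e * chi R x e) * 1)); last first.
    by move=> x Xx; rewrite mulr1 fE.
  rewrite sum_linear_mul; apply: eq_bigr => e _.
  by rewrite /ncycles_through -sum1dep_card natr_sum.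
have -> : n%:R - 1 = n.-1%:R :> R by rewrite -subn1 natrB //; lia.
apply: (mulIf (lt0r_neq0 X_gt0)); rewrite -[in RHS]sum_f sum_f_coef [RHS]mulr_sumr.
under [RHS]eq_bigr do rewrite mulrCA -natrM mulnC ncycles_through_card // natrM.
by rewrite -mulr_suml mulrA (mulrC 2).
Qed.

Lemma in_Pk_sum_01_ge0 (ps : seq {mpoly R[nE n]}) :
  (forall p, p \in ps -> (msize p <= k.+1)%N) ->
  (forall p, p \in ps -> forall x, x \in ham_cycles n ->
     p.@[inc R x] = 0 \/ p.@[inc R x] = 1) ->
  0 <= \sum_(x in ham_cycles n) f x * \sum_(p <- ps) p.@[inc R x].
Proof.
move=> deg_ps ps01; have [_ _ q_ge0] := fPk.
under eq_bigr do rewrite mulr_sumr.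
rewrite exchange_big /= big_seq; apply: sumr_ge0 => p ps_p.
have := q_ge0 p (deg_ps p ps_p).
rewrite pmulr_rge0 ?invr_gt0 ?ltr0n ?ham_cycles_card_gt0 //.
congr (0 <= _); apply: eq_bigr => x Xx.
by case: (ps01 p ps_p x Xx) => ->; rewrite ?expr0n ?expr1n.
Qed.

End FunctionsInPk.

Theorem lemma1 (R : realFieldType) (n k : nat) (y : {set edge n})
    (f : {set edge n} -> R) (ps : seq {mpoly R[nE n]}) (b c : R) :
  (3 <= n)%N ->
  y \in ham_cycles n ->
  in_Pk k f ->
  (forall p, p \in ps -> (msize p <= k.+1)%N) ->
  (forall p, p \in ps -> forall x, x \in ham_cycles n ->
     p.@[inc R x] = 0 \/ p.@[inc R x] = 1) ->
  0 < b -> b < c ->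
  (forall e : edge n,
     \sum_(x in ham_cycles n | e \in x) \sum_(p <- ps) p.@[inc R x]
       = if e \in y then c else b) ->
  - (b * (n%:R - 1)) / (2 * (c - b)) <= f y.
Proof.
move=> n_gt2 yX fPk deg_ps ps01 _ b_lt_c sum_ps.
have [[a fE] _ _] := fPk.
have coef_sum := in_Pk_sum_coef fPk n_gt2 fE.
have := in_Pk_sum_01_ge0 fPk deg_ps ps01.
have -> : \sum_(x in ham_cycles n) f x * \sum_(p <- ps) p.@[inc R x]
    = b * \sum_e a e + (c - b) * f y.
  rewrite (eq_bigr (fun x => (\sum_e a e * chi R x e) * \sum_(p <- ps) p.@[inc R x]));
    last by move=> x /fE ->.
  rewrite sum_linear_mul (fE y yX) !mulr_sumr -big_split /=; apply: eq_bigr => e _.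
  by rewrite sum_ps /chi; case: (e \in y); ring.
by rewrite ler_pdivrMr ?mulr_gt0 ?subr_gt0 // -coef_sum; lra.
Qed.
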